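(* Let $J_0$ be a two-sided $p$-periodic Jacobi matrix, $1\le q\le\infty$, and $\varepsilon>0$. There is a constant $C$ such that $$e^{1-p}\bigl\|\tilde d_m((a,b),\mathcal{T}_{J_0})\bigr\|_{\ell^q}\le\bigl\|d_m((a,b),\mathcal{T}_{J_0})\bigr\|_{\ell^q}\le C\bigl\|\tilde d_m((a,b),\mathcal{T}_{J_0})\bigr\|_{\ell^q}$$ for all bounded sequences $\{(a_n,b_n)\}_{n\ge1}$ with $b_n\in\mathbb{R}$ and $\varepsilon^{-1}>a_n>\varepsilon$ for all $n$, where all $\ell^q$ norms are taken over $m\in\{1,2,3,\dots\}$.
   Context: For a two-sided $p$-periodic Jacobi matrix $J_0$ (tridiagonal on $\ell^2(\mathbb{Z})$ with $p$-periodic parameters $a^{(0)}_n>0$, $b^{(0)}_n\in\mathbb{R}$), its discriminant is $\Delta_{J_0}(x)=\mathrm{Tr}(\Lambda_p(x)\cdots\Lambda_1(x))$ with $\Lambda_n(x)=\frac1{a^{(0)}_n}\begin{pmatrix}x-b^{(0)}_n&-1\\(a^{(0)}_n)^2&0\end{pmatrix}$, and the isospectral torus $\mathcal{T}_{J_0}$ is the set of two-sided $p$-periodic Jacobi parameter sequences with the same discriminant. For sequences $(a,b),(a',b')$ (two-sided ones restricted to indices $\ge1$): $d_m((a,b),(a',b'))=\sum_{k=0}^\infty e^{-k}(|a_{m+k}-a'_{m+k}|+|b_{m+k}-b'_{m+k}|)$ and $\tilde d_m((a,b),(a',b'))=\sum_{k=0}^{p-1}(|a_{m+k}-a'_{m+k}|+|b_{m+k}-b'_{m+k}|)$;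 distances to $\mathcal{T}_{J_0}$ are infima over $(a',b')\in\mathcal{T}_{J_0}$. *)

From Stdlib Require Import Reals ZArith Lia.
From Coquelicot Require Import Coquelicot.
Open Scope R_scope.

(** 2x2 real matrices as (m11, m12, m21, m22). *)
Definition mat2 : Type := (R * R * R * R)%type.

Definition mat2_id : mat2 := (1, 0, 0, 1).

Definition mat2_mul (A B : mat2) : mat2 :=
  match A, B with
  | (a11, a12, a21, a22), (b11, b12, b21, b22) =>
    (a11 * b11 + a12 * b21, a11 * b12 + a12 * b22,
     a21 * b11 + a22 * b21, a21 * b12 + a22 * b22)
  end.

Definition mat2_tr (A : mat2) : R :=
  match A with (a11, _, _, a22) => a11 + a22 end.

(** Lambda_n(x) = (1/a_n) [[x - b_n, -1], [a_n^2, 0]]. *)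
Definition Lambda (a b : Z -> R) (n : nat) (x : R) : mat2 :=
  let an := a (Z.of_nat n) in
  let bn := b (Z.of_nat n) in
  ((x - bn) / an, (-1) / an, an ^ 2 / an, 0).

Fixpoint transfer (a b : Z -> R) (n : nat) (x : R) : mat2 :=
  match n with
  | O => mat2_id
  | S k => mat2_mul (Lambda a b (S k) x) (transfer a b k x)
  end.

Definition discriminant (p : nat) (a b : Z -> R) (x : R) : R :=
  mat2_tr (transfer a b p x).

Definition periodic_jacobi (p : nat) (a b : Z -> R) : Prop :=
  (forall n : Z, a (n + Z.of_nat p)%Z = a n) /\
  (forall n : Z, b (n + Z.of_nat p)%Z = b n) /\
  (forall n : Z, 0 < a n).

Definition iso_torus (p : nat) (a0 b0 : Z -> R) (a' b' : Z -> R) : Prop :=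
  periodic_jacobi p a' b' /\
  (forall x : R, discriminant p a' b' x = discriminant p a0 b0 x).

Definition jdiff (a b : nat -> R) (a' b' : Z -> R) (n : nat) : R :=
  Rabs (a n - a' (Z.of_nat n)) + Rabs (b n - b' (Z.of_nat n)).

Definition d_m (a b : nat -> R) (a' b' : Z -> R) (m : nat) : R :=
  Series (fun k : nat => exp (- INR k) * jdiff a b a' b' (m + k)).

Fixpoint fsum (f : nat -> R) (n : nat) : R :=
  match n with
  | O => 0
  | S k => fsum f k + f k
  end.

Definition dt_m (p : nat) (a b : nat -> R) (a' b' : Z -> R) (m : nat) : R :=
  fsum (fun k : nat => jdiff a b a' b' (m + k)) p.

Definition d_torus (p : nat) (a0 b0 : Z -> R) (a b : nat -> R) (m : nat) : R :=
  real (Glb_Rbar (fun r : R => exists a' b' : Z -> R,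
          iso_torus p a0 b0 a' b' /\ r = d_m a b a' b' m)).

Definition dt_torus (p : nat) (a0 b0 : Z -> R) (a b : nat -> R) (m : nat) : R :=
  real (Glb_Rbar (fun r : R => exists a' b' : Z -> R,
          iso_torus p a0 b0 a' b' /\ r = dt_m p a b a' b' m)).

(** x^y for x >= 0, y > 0 (with 0^y = 0). *)
Definition rpow (x y : R) : R :=
  if Rlt_dec 0 x then Rpower x y else 0.

(** ell^q norm over m in {1,2,3,...}, valued in [0, +oo]; q in [1, +oo]. *)
Definition lq_norm (q : Rbar) (f : nat -> R) : Rbar :=
  match q with
  | Finite q' =>
      match Lim_seq (fun N : nat => fsum (fun i : nat => rpow (Rabs (f (S i))) q') N) with
      | Finite s => Finite (rpow s (/ q'))
      | p_infty => p_infty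
      | m_infty => m_infty
      end
  | p_infty => Sup_seq (fun i : nat => Finite (Rabs (f (S i))))
  | m_infty => m_infty
  end.

From Stdlib Require Import Reals ZArith Lra Lia List Classical ClassicalEpsilon.
From Coquelicot Require Import Coquelicot.
Open Scope R_scope.

(* The lower bound is termwise: the first [p] weights [exp (- k)] of [d_m] are at least
   [exp (1 - p)].

   For the upper bound, the two top coefficients of the discriminant show that all points of the
   isospectral torus share the product of the [a]'s and the sum of the [b]'s over every window of
   length [p]. Hence two torus points close to [(a, b)] on the overlapping windows starting at [m]
   and [m + 1] are close everywhere: they nearly agree on the overlap, and the remaining entry is
   fixed by the window product and sum. Gluing almost optimal torus points for the windows starting
   at [m], [m + 1], ... produces one torus point at distance [O (Y exp (k / 2))] from [(a, b)] at
   [m + k] whenever [dt_torus (m + k) <= Y exp (k / 4)], so [d_torus m = O (Y)]. Taking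
   [Y^q = sum_i exp (- i / 4) dt_torus (m + i)^q] and summing over [m] gives the l^q bound. *)

Lemma fsum_ext f g n : (forall k, (k < n)%nat -> f k = g k) -> fsum f n = fsum g n.
Proof.
  induction n as [|n IH]; intro H; simpl; [reflexivity|].
  rewrite IH by (intros; apply H; lia). rewrite H by lia. reflexivity.
Qed.

Lemma fsum_le f g n : (forall k, (k < n)%nat -> f k <= g k) -> fsum f n <= fsum g n.
Proof.
  induction n as [|n IH]; intro H; simpl; [lra|].
  pose proof (H n ltac:(lia)); pose proof (IH ltac:(intros; apply H; lia)); lra.
Qed.

Lemma fsum_const c n : fsum (fun _ => c) n = c * INR n.
Proof. induction n; simpl fsum; [simpl; ring| rewrite IHn, S_INR; ring]. Qed.

Lemma fsum_nonneg f n : (forall k, (k < n)%nat -> 0 <= f k) -> 0 <= fsum f n.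
Proof.
  intro H. replace 0 with (fsum (fun _ => 0) n) by (rewrite fsum_const; ring).
  apply fsum_le, H.
Qed.

Lemma fsum_ge_term f n k : (forall k, (k < n)%nat -> 0 <= f k) -> (k < n)%nat -> f k <= fsum f n.
Proof.
  induction n as [|n IH]; intros H Hk; [lia|]. simpl.
  pose proof (fsum_nonneg f n ltac:(intros; apply H; lia)).
  destruct (Nat.eq_dec k n) as [->|Hne]; [lra|].
  pose proof (IH ltac:(intros; apply H; lia) ltac:(lia)). pose proof (H n ltac:(lia)). lra.
Qed.

Lemma fsum_plus f g n : fsum (fun k => f k + g k) n = fsum f n + fsum g n.
Proof. induction n; simpl; [ring| rewrite IHn; ring]. Qed.

Lemma fsum_minus f g n : fsum (fun k => f k - g k) n = fsum f n - fsum g n.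
Proof. induction n; simpl; [ring| rewrite IHn; ring]. Qed.

Lemma fsum_scal c f n : fsum (fun k => c * f k) n = c * fsum f n.
Proof. induction n; simpl; [ring| rewrite IHn; ring]. Qed.

Lemma fsum_abs f n : Rabs (fsum f n) <= fsum (fun k => Rabs (f k)) n.
Proof.
  induction n; simpl; [rewrite Rabs_R0; lra|].
  eapply Rle_trans; [apply Rabs_triang| lra].
Qed.

Lemma fsum_succ_l f n : fsum f (S n) = f O + fsum (fun k => f (S k)) n.
Proof. induction n; simpl in *; [ring| rewrite IHn; ring]. Qed.

Lemma fsum_add_split u i N : fsum (fun j => u (j + i)%nat) N + fsum u i = fsum u (N + i).
Proof. induction N; simpl; [ring| rewrite <- IHN; ring]. Qed.

Lemma fsum_sum_n u n : fsum u (S n) = sum_n u n.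
Proof.
  induction n; [simpl; rewrite sum_O; ring|].
  rewrite sum_Sn, <- IHn. reflexivity.
Qed.

Lemma Series_nonneg_terms u : (forall n, 0 <= u n) -> 0 <= Series u.
Proof.
  intro H. unfold Series.
  assert (Rbar_le 0 (Lim_seq (sum_n u))).
  { rewrite <- (Lim_seq_const 0). apply Lim_seq_le_loc. exists O. intros n _.
    rewrite <- fsum_sum_n. apply fsum_nonneg; auto. }
  destruct (Lim_seq (sum_n u)); simpl in *; lra.
Qed.

Lemma fsum_le_Series u n : (forall k, 0 <= u k) -> ex_series u -> fsum u n <= Series u.
Proof.
  intros H Hex. apply Rle_trans with (fsum u (S n)); [simpl; pose proof (H n); lra|].
  rewrite fsum_sum_n. apply (is_lim_seq_incr_compare (sum_n u)); [apply Series_correct, Hex|].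
  intro k. rewrite sum_Sn. pose proof (H (S k)). unfold plus; simpl; lra.
Qed.

Lemma Series_ge_term v i : (forall k, 0 <= v k) -> ex_series v -> v i <= Series v.
Proof.
  intros H Hex. apply Rle_trans with (fsum v (S i)); [apply fsum_ge_term; auto|].
  apply fsum_le_Series; auto.
Qed.

Lemma Series_fsum (h : nat -> nat -> R) N : (forall j, ex_series (h j)) ->
  ex_series (fun i => fsum (fun j => h j i) N) /\
  Series (fun i => fsum (fun j => h j i) N) = fsum (fun j => Series (h j)) N.
Proof.
  intros Hex. induction N as [|N [IH1 IH2]]; simpl fsum.
  - assert (H0 : is_series (fun _ : nat => 0) 0).
    { apply (filterlim_ext (fun _ => 0)); [|apply filterlim_const].
      intro n. rewrite <- fsum_sum_n, fsum_const. simpl. ring. }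
    split; [exists 0; exact H0| apply is_series_unique, H0].
  - split; [apply (@ex_series_plus R_AbsRing R_NormedModule); auto|].
    rewrite Series_plus, IH2 by auto. reflexivity.
Qed.

Fixpoint fprod (f : nat -> R) (n : nat) : R :=
  match n with O => 1 | S k => fprod f k * f k end.

Lemma fprod_succ_l f n : fprod f (S n) = f O * fprod (fun k => f (S k)) n.
Proof. induction n; simpl in *; [ring| rewrite IHn; ring]. Qed.

Lemma fprod_ext f g n : (forall k, (k < n)%nat -> f k = g k) -> fprod f n = fprod g n.
Proof.
  induction n as [|n IH]; intro H; simpl; [reflexivity|].
  rewrite IH by (intros; apply H; lia). rewrite H by lia. reflexivity.
Qed.

Lemma fprod_bounds x n U : (forall k, (k < n)%nat -> 0 <= x k <= U) -> 0 <= fprod x n <= U ^ n.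
Proof.
  induction n; intro H; simpl; [lra|].
  destruct (IHn ltac:(intros; apply H; lia)). destruct (H n ltac:(lia)).
  split; [nra|]. rewrite Rmult_comm. apply Rmult_le_compat; lra.
Qed.

Lemma fprod_ge_pow x n l : 0 < l -> (forall k, (k < n)%nat -> l <= x k) -> l ^ n <= fprod x n.
Proof.
  intro Hl; induction n; intro H; simpl; [lra|].
  pose proof (IHn ltac:(intros; apply H; lia)). pose proof (H n ltac:(lia)).
  rewrite Rmult_comm. apply Rmult_le_compat; try lra. apply pow_le; lra.
Qed.

Lemma fprod_lipschitz x y n U : 1 <= U ->
  (forall k, (k < n)%nat -> 0 <= x k <= U /\ 0 <= y k <= U) ->
  Rabs (fprod x n - fprod y n) <= U ^ n * fsum (fun k => Rabs (x k - y k)) n.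
Proof.
  intro HU; induction n; intro H; simpl.
  - rewrite Rminus_diag, Rabs_R0; lra.
  - pose proof (IHn ltac:(intros; apply H; lia)) as IH.
    destruct (H n ltac:(lia)) as [[Hx1 Hx2] [Hy1 Hy2]].
    destruct (fprod_bounds x n U ltac:(intros; apply H; lia)) as [Px1 Px2].
    replace (fprod x n * x n - fprod y n * y n) with
      (fprod x n * (x n - y n) + (fprod x n - fprod y n) * y n) by ring.
    eapply Rle_trans; [apply Rabs_triang|]. rewrite !Rabs_mult.
    rewrite (Rabs_pos_eq (fprod x n)), (Rabs_pos_eq (y n)) by lra.
    pose proof (Rabs_pos (x n - y n)). pose proof (Rabs_pos (fprod x n - fprod y n)).
    assert (Hs : 0 <= fsum (fun k => Rabs (x k - y k)) n) by (apply fsum_nonneg; intros; apply Rabs_pos).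
    assert (1 <= U ^ n) by (apply pow_R1_Rle; lra).
    assert (fprod x n * Rabs (x n - y n) <= U * U ^ n * Rabs (x n - y n)) by
      (apply Rmult_le_compat_r; nra).
    assert (Rabs (fprod x n - fprod y n) * y n <= U ^ n * fsum (fun k => Rabs (x k - y k)) n * U)
      by (apply Rmult_le_compat; lra).
    nra.
Qed.

Fixpoint peval (l : list R) (x : R) : R :=
  match l with nil => 0 | c :: l' => c + x * peval l' x end.

Fixpoint padd (l1 l2 : list R) : list R :=
  match l1, l2 with
  | nil, _ => l2
  | _, nil => l1
  | c1 :: t1, c2 :: t2 => (c1 + c2) :: padd t1 t2
  end.

Definition pscale (c : R) (l : list R) : list R := map (Rmult c) l.

Definition coef (l : list R) (j : nat) : R := nth j l 0.

Lemma peval_padd l1 l2 x : peval (padd l1 l2) x = peval l1 x + peval l2 x.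
Proof.
  revert l2; induction l1 as [|c1 t1 IH]; intros [|c2 t2]; simpl; try ring.
  rewrite IH; ring.
Qed.

Lemma peval_pscale c l x : peval (pscale c l) x = c * peval l x.
Proof. induction l as [|h t IH]; simpl; [ring| rewrite IH; ring]. Qed.

Lemma coef_nil j : coef nil j = 0.
Proof. destruct j; reflexivity. Qed.

Lemma coef_padd l1 l2 j : coef (padd l1 l2) j = coef l1 j + coef l2 j.
Proof.
  unfold coef; revert l2 j; induction l1 as [|c1 t1 IH]; intros [|c2 t2] [|j]; simpl;
    try ring; try (destruct j; simpl; ring); apply IH.
Qed.

Lemma coef_pscale c l j : coef (pscale c l) j = c * coef l j.
Proof.
  unfold coef, pscale; revert j; induction l as [|h t IH]; intros [|j]; simpl; try ring; apply IH.
Qed.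

Fixpoint sumabs (l : list R) : R :=
  match l with nil => 0 | c :: t => Rabs c + sumabs t end.

Lemma sumabs_nonneg l : 0 <= sumabs l.
Proof. induction l; simpl; [lra| pose proof (Rabs_pos a); lra]. Qed.

Lemma peval_abs_le l x : Rabs x <= 1 -> Rabs (peval l x) <= sumabs l.
Proof.
  intro Hx; induction l as [|c t IH]; simpl; [rewrite Rabs_R0; lra|].
  eapply Rle_trans; [apply Rabs_triang|]. rewrite Rabs_mult.
  pose proof (Rabs_pos x); pose proof (Rabs_pos (peval t x)).
  assert (Rabs x * Rabs (peval t x) <= 1 * sumabs t) by (apply Rmult_le_compat; lra). lra.
Qed.

(* Near [x = 0+], [c + x * peval t x] is dominated by [c]. *)
Lemma peval_pos_eq0_head c t : (forall x, 0 < x -> peval (c :: t) x = 0) -> c = 0.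
Proof.
  intro H. destruct (Req_dec c 0) as [e|n]; [exact e|exfalso].
  set (s := sumabs t). pose proof (sumabs_nonneg t : 0 <= s). pose proof (Rabs_pos_lt c n).
  set (x := Rabs c / (Rabs c + s + 1)).
  assert (Hx0 : 0 < x) by (apply Rdiv_lt_0_compat; lra).
  assert (Hx1 : x < 1) by (apply (Rdiv_lt_1 (Rabs c) (Rabs c + s + 1) ltac:(lra)); lra).
  pose proof (H x Hx0) as Hz. simpl in Hz.
  assert (Rabs (peval t x) <= s) by (apply peval_abs_le; rewrite Rabs_pos_eq; lra).
  assert (Hc : Rabs c = Rabs (x * peval t x)) by (rewrite <- Rabs_Ropp; f_equal; lra).
  rewrite Rabs_mult, (Rabs_pos_eq x) in Hc by lra.
  assert (x * Rabs (peval t x) <= x * s) by (apply Rmult_le_compat_l; lra).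
  assert (x * s < Rabs c).
  { unfold x. replace (Rabs c / (Rabs c + s + 1) * s) with ((Rabs c * s) / (Rabs c + s + 1))
      by (field; lra).
    apply (Rlt_div_l (Rabs c * s) (Rabs c) (Rabs c + s + 1) ltac:(lra)); nra. }
  lra.
Qed.

Lemma peval_pos_eq0_coef l : (forall x, 0 < x -> peval l x = 0) -> forall j, coef l j = 0.
Proof.
  induction l as [|c t IH]; intros H j; [apply coef_nil|].
  pose proof (peval_pos_eq0_head c t H) as Hc.
  destruct j as [|j]; [exact Hc|].
  apply IH. intros x Hx. pose proof (H x Hx) as Hz; simpl in Hz. rewrite Hc in Hz.
  apply Rmult_eq_reg_l with x; lra.
Qed.

Definition aprod (a : Z -> R) (n : nat) : R := fprod (fun k => a (Z.of_nat (S k))) n.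
Definition bsum (b : Z -> R) (n : nat) : R := fsum (fun k => b (Z.of_nat (S k))) n.

Lemma aprod_pos a n : (forall z, 0 < a z) -> 0 < aprod a n.
Proof. intro H; unfold aprod; induction n; simpl; [lra| apply Rmult_lt_0_compat; auto]. Qed.

Record poly_mat := PolyMat { pm11 : list R; pm12 : list R; pm21 : list R; pm22 : list R }.

(* Coefficient lists of [aprod a n * transfer a b n x], constant term first. *)
Fixpoint transfer_poly (a b : Z -> R) (n : nat) : poly_mat :=
  match n with
  | O => PolyMat (1 :: nil) nil nil (1 :: nil)
  | S k =>
    let T := transfer_poly a b k in
    let an := a (Z.of_nat (S k)) in
    let bn := b (Z.of_nat (S k)) in
    PolyMat (padd (padd (0 :: pm11 T) (pscale (- bn) (pm11 T))) (pscale (-1) (pm21 T)))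
            (padd (padd (0 :: pm12 T) (pscale (- bn) (pm12 T))) (pscale (-1) (pm22 T)))
            (pscale (an ^ 2) (pm11 T)) (pscale (an ^ 2) (pm12 T))
  end.

Lemma transfer_poly_eval a b n x : (forall z, 0 < a z) ->
  let T := transfer_poly a b n in
  transfer a b n x =
   (peval (pm11 T) x / aprod a n, peval (pm12 T) x / aprod a n,
    peval (pm21 T) x / aprod a n, peval (pm22 T) x / aprod a n).
Proof.
  intro Ha. induction n as [|k IH].
  { simpl. unfold mat2_id. f_equal; [f_equal; [f_equal|]|]; unfold aprod; simpl; field. }
  cbn [transfer transfer_poly pm11 pm12 pm21 pm22]. rewrite IH. unfold Lambda, mat2_mul.
  rewrite !peval_padd, !peval_pscale. cbn [peval].
  change (aprod a (S k)) with (aprod a k * a (Z.of_nat (S k))).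
  pose proof (aprod_pos a k Ha). pose proof (Ha (Z.of_nat (S k))).
  f_equal; [f_equal; [f_equal|]|]; field; lra.
Qed.

Lemma discriminant_poly p a b x : (forall z, 0 < a z) ->
  discriminant p a b x =
  peval (padd (pm11 (transfer_poly a b p)) (pm22 (transfer_poly a b p))) x / aprod a p.
Proof.
  intro Ha. unfold discriminant. rewrite transfer_poly_eval by exact Ha. simpl.
  rewrite peval_padd. field. pose proof (aprod_pos a p Ha); lra.
Qed.

(* [coef (0 :: l) n] is the coefficient of degree [n - 1], read as [0] when [n = 0]. *)
Lemma transfer_poly_coef a b n :
  let T := transfer_poly a b n in
  (forall j, (n < j)%nat -> coef (pm11 T) j = 0) /\
  coef (pm11 T) n = 1 /\
  coef (0 :: pm11 T) n = - bsum b n /\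
  (forall j, (n <= j)%nat -> coef (pm12 T) j = 0) /\
  (forall j, (n <= j)%nat -> coef (pm21 T) j = 0) /\
  (forall j, (n < j)%nat -> coef (pm22 T) j = 0).
Proof.
  induction n as [|k [HA1 [HA2 [HA3 [HB [HC HD]]]]]].
  - cbn. repeat split; try ring; intros [|[|j]] Hj; reflexivity || lia.
  - cbn [transfer_poly pm11 pm12 pm21 pm22].
    change (bsum b (S k)) with (bsum b k + b (Z.of_nat (S k))).
    repeat split.
    + intros [|j] Hj; [lia|]. rewrite !coef_padd, !coef_pscale.
      change (coef (0 :: pm11 (transfer_poly a b k)) (S j)) with (coef (pm11 (transfer_poly a b k)) j).
      rewrite !HA1, HC by lia. ring.
    + rewrite !coef_padd, !coef_pscale.
      change (coef (0 :: pm11 (transfer_poly a b k)) (S k)) with (coef (pm11 (transfer_poly a b k)) k).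
      rewrite HA2, HA1, HC by lia. ring.
    + change (coef (0 :: ?l) (S k)) with (coef l k).
      rewrite !coef_padd, !coef_pscale, HA2, HA3, HC by lia. ring.
    + intros [|j] Hj; [lia|]. rewrite !coef_padd, !coef_pscale.
      change (coef (0 :: pm12 (transfer_poly a b k)) (S j)) with (coef (pm12 (transfer_poly a b k)) j).
      rewrite !HB, HD by lia. ring.
    + intros j Hj. rewrite coef_pscale, HA1 by lia. ring.
    + intros j Hj. rewrite coef_pscale, HB by lia. ring.
Qed.

Lemma trace_poly_top_coefs a b k :
  let T := transfer_poly a b (S k) in
  coef (padd (pm11 T) (pm22 T)) (S k) = 1 /\
  coef (padd (pm11 T) (pm22 T)) k = - bsum b (S k).
Proof.
  destruct (transfer_poly_coef a b (S k)) as [_ [HA2 [HA3 _]]].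
  destruct (transfer_poly_coef a b k) as [_ [_ [_ [HB _]]]].
  cbn zeta in *. rewrite !coef_padd, HA2. split.
  - cbn [transfer_poly pm22]. rewrite coef_pscale, HB by lia. ring.
  - change (coef (0 :: ?l) (S k)) with (coef l k) in HA3. rewrite HA3.
    cbn [transfer_poly pm22]. rewrite coef_pscale, HB by lia. ring.
Qed.

(* The discriminant is [(x^p - bsum b p * x^(p-1) + ...) / aprod a p], so equal discriminants
   force equal products of the [a]'s and equal sums of the [b]'s over a period. *)
Lemma iso_torus_prod_sum p a0 b0 a b : (1 <= p)%nat ->
  periodic_jacobi p a0 b0 -> iso_torus p a0 b0 a b ->
  aprod a p = aprod a0 p /\ bsum b p = bsum b0 p.
Proof.
  intros Hp [_ [_ Ha0]] [[_ [_ Ha]] Hd].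
  destruct p as [|k]; [lia|].
  set (tr := fun a b => padd (pm11 (transfer_poly a b (S k))) (pm22 (transfer_poly a b (S k)))).
  set (L := padd (pscale (/ aprod a (S k)) (tr a b)) (pscale (- / aprod a0 (S k)) (tr a0 b0))).
  assert (HL : forall j, coef L j = 0).
  { apply peval_pos_eq0_coef. intros x _. unfold L. rewrite peval_padd, !peval_pscale.
    specialize (Hd x). rewrite !discriminant_poly in Hd by auto. unfold Rdiv in Hd. unfold tr. lra. }
  pose proof (aprod_pos a (S k) Ha). pose proof (aprod_pos a0 (S k) Ha0).
  destruct (trace_poly_top_coefs a b k) as [T1 T2].
  destruct (trace_poly_top_coefs a0 b0 k) as [T1' T2'].
  pose proof (HL (S k)) as C1. pose proof (HL k) as C2.
  unfold L in C1, C2. rewrite !coef_padd, !coef_pscale in C1, C2. unfold tr in C1, C2.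
  rewrite T1, T1' in C1. rewrite T2, T2' in C2.
  assert (E : aprod a (S k) = aprod a0 (S k)).
  { apply Rinv_eq_reg. lra. }
  split; [exact E|]. rewrite E in C2.
  apply Rmult_eq_reg_l with (/ aprod a0 (S k)); [lra| apply Rinv_neq_0_compat; lra].
Qed.

Lemma periodic_shift (p : nat) (f : Z -> R) : (forall z, f (z + Z.of_nat p)%Z = f z) ->
  forall z q, f (z + Z.of_nat p * q)%Z = f z.
Proof.
  intros H.
  assert (Hn : forall n z, f (z + Z.of_nat p * Z.of_nat n)%Z = f z).
  { induction n; intro z; [f_equal; lia|].
    replace (z + Z.of_nat p * Z.of_nat (S n))%Z with ((z + Z.of_nat p * Z.of_nat n) + Z.of_nat p)%Z
      by lia.
    rewrite H; apply IHn. }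
  intros z q. destruct (Z_le_gt_dec 0 q).
  - replace q with (Z.of_nat (Z.to_nat q)) by lia. apply Hn.
  - rewrite <- (Hn (Z.to_nat (- q)) (z + Z.of_nat p * q)%Z). f_equal. lia.
Qed.

Lemma Z_window_decomp (p w : nat) (z : Z) : (1 <= p)%nat ->
  exists k q, (k < p)%nat /\ z = (Z.of_nat (w + 1 + k) + Z.of_nat p * q)%Z.
Proof.
  intro Hp. set (P := Z.of_nat p). set (d := (z - Z.of_nat (w + 1))%Z).
  pose proof (Z.div_mod d P ltac:(lia)). pose proof (Z.mod_pos_bound d P ltac:(lia)).
  exists (Z.to_nat (d mod P)), (d / P)%Z. split; [lia|]. unfold d, P in *. lia.
Qed.

Lemma periodic_window_value (p w : nat) (f : Z -> R) : (1 <= p)%nat ->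
  (forall z, f (z + Z.of_nat p)%Z = f z) ->
  forall z, exists k, (k < p)%nat /\ f z = f (Z.of_nat (w + 1 + k)).
Proof.
  intros Hp Hf z. destruct (Z_window_decomp p w z Hp) as [k [q [Hk ->]]].
  exists k. split; [exact Hk| apply periodic_shift, Hf].
Qed.

Lemma periodic_abs_le (p : nat) (f : Z -> R) : (1 <= p)%nat ->
  (forall z, f (z + Z.of_nat p)%Z = f z) ->
  forall z, Rabs (f z) <= fsum (fun k => Rabs (f (Z.of_nat (S k)))) p.
Proof.
  intros Hp Hf z. destruct (periodic_window_value p 0 f Hp Hf z) as [k [Hk ->]].
  apply (fsum_ge_term (fun k => Rabs (f (Z.of_nat (S k))))); [intros; apply Rabs_pos| exact Hk].
Qed.

Lemma fsum_window_const (f : nat -> R) p : (forall w, f (w + p)%nat = f w) ->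
  forall w, fsum (fun k => f (w + k)%nat) p = fsum f p.
Proof.
  intros Hper w. induction w as [|w IH]; [reflexivity|]. rewrite <- IH.
  apply Rplus_eq_reg_l with (f w).
  pose proof (fsum_succ_l (fun k => f (w + k)%nat) p) as E. simpl in E.
  rewrite Nat.add_0_r in E.
  rewrite (fsum_ext _ (fun k => f (w + S k)%nat)) by (intros; f_equal; lia).
  rewrite <- E, <- (Hper w), Rplus_comm. reflexivity.
Qed.

Lemma fprod_window_const (f : nat -> R) p : (forall w, f (w + p)%nat = f w) ->
  (forall w, f w <> 0) -> forall w, fprod (fun k => f (w + k)%nat) p = fprod f p.
Proof.
  intros Hper Hnz w. induction w as [|w IH]; [reflexivity|]. rewrite <- IH.
  apply Rmult_eq_reg_l with (f w); [| apply Hnz].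
  pose proof (fprod_succ_l (fun k => f (w + k)%nat) p) as E. simpl in E.
  rewrite Nat.add_0_r in E.
  rewrite (fprod_ext _ (fun k => f (w + S k)%nat)) by (intros; f_equal; lia).
  rewrite <- E, <- (Hper w), Rmult_comm. reflexivity.
Qed.

Definition constant_windows (p : nat) (pi sg : R) (a b : Z -> R) : Prop :=
  periodic_jacobi p a b /\
  (forall w : nat, fprod (fun k => a (Z.of_nat (w + k))) p = pi) /\
  (forall w : nat, fsum (fun k => b (Z.of_nat (w + k))) p = sg).

Lemma iso_torus_constant_windows p a0 b0 a b : (1 <= p)%nat -> periodic_jacobi p a0 b0 ->
  iso_torus p a0 b0 a b -> constant_windows p (aprod a0 p) (bsum b0 p) a b.
Proof.
  intros Hp H0 HT. destruct (iso_torus_prod_sum p a0 b0 a b Hp H0 HT) as [Ea Eb].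
  destruct HT as [[Ha [Hb Hpos]] _].
  assert (Hper : forall (f : Z -> R) w, (forall z, f (z + Z.of_nat p)%Z = f z) ->
            f (Z.of_nat (w + p)) = f (Z.of_nat w)).
  { intros f w Hf. rewrite Nat2Z.inj_add. apply Hf. }
  split; [repeat split; auto| split]; intro w.
  - rewrite <- Ea. unfold aprod.
    pose proof (fprod_window_const (fun n => a (Z.of_nat n)) p
                  (fun w => Hper a w Ha) (fun w => Rgt_not_eq _ _ (Hpos _))) as Hw.
    rewrite (Hw w), <- (Hw 1%nat). reflexivity.
  - rewrite <- Eb. unfold bsum.
    pose proof (fsum_window_const (fun n => b (Z.of_nat n)) p (fun w => Hper b w Hb)) as Hw.
    rewrite (Hw w), <- (Hw 1%nat). reflexivity.
Qed.

Lemma jdiff_nonneg a b a1 b1 n : 0 <= jdiff a b a1 b1 n.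
Proof. unfold jdiff. apply Rplus_le_le_0_compat; apply Rabs_pos. Qed.

Definition pdist (a1 b1 a2 b2 : Z -> R) (z : Z) : R := Rabs (a1 z - a2 z) + Rabs (b1 z - b2 z).

Lemma pdist_le_jdiff a b a1 b1 a2 b2 n :
  pdist a1 b1 a2 b2 (Z.of_nat n) <= jdiff a b a1 b1 n + jdiff a b a2 b2 n.
Proof.
  unfold pdist, jdiff. set (z := Z.of_nat n).
  pose proof (R_dist_tri (a1 z) (a2 z) (a n)). pose proof (R_dist_tri (b1 z) (b2 z) (b n)).
  unfold R_dist in *. rewrite (Rabs_minus_sym (a1 z) (a n)) in H.
  rewrite (Rabs_minus_sym (b1 z) (b n)) in H0. lra.
Qed.

Lemma jdiff_triangle a b a1 b1 a2 b2 n :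
  jdiff a b a1 b1 n <= jdiff a b a2 b2 n + pdist a1 b1 a2 b2 (Z.of_nat n).
Proof.
  unfold pdist, jdiff. set (z := Z.of_nat n).
  pose proof (R_dist_tri (a n) (a1 z) (a2 z)). pose proof (R_dist_tri (b n) (b1 z) (b2 z)).
  unfold R_dist in *. rewrite (Rabs_minus_sym (a2 z) (a1 z)) in H.
  rewrite (Rabs_minus_sym (b2 z) (b1 z)) in H0. lra.
Qed.

Lemma fsum_eq_last_le f g n : fsum f (S n) = fsum g (S n) ->
  Rabs (f n - g n) <= fsum (fun j => Rabs (f j - g j)) n.
Proof.
  simpl. intro E.
  replace (f n - g n) with (fsum (fun j => g j - f j) n) by (rewrite fsum_minus; lra).
  eapply Rle_trans; [apply fsum_abs|]. right. apply fsum_ext. intros. apply Rabs_minus_sym.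
Qed.

Lemma fprod_eq_last_le f g n pi l U : 0 <= pi -> 0 < l -> 1 <= U ->
  fprod f (S n) = pi -> fprod g (S n) = pi ->
  (forall j, (j < n)%nat -> l <= f j <= U /\ l <= g j <= U) ->
  Rabs (f n - g n) <= pi * U ^ n / (l ^ n) ^ 2 * fsum (fun j => Rabs (f j - g j)) n.
Proof.
  cbn [fprod]. set (P1 := fprod f n). set (P2 := fprod g n). set (s := fsum _ n).
  intros Hpi Hl HU Ef Eg Hfg.
  assert (HP1 : l ^ n <= P1) by (apply fprod_ge_pow; [lra| intros; apply Hfg; auto]).
  assert (HP2 : l ^ n <= P2) by (apply fprod_ge_pow; [lra| intros; apply Hfg; auto]).
  assert (Hln : 0 < l ^ n) by (apply pow_lt; lra).
  assert (Lip : Rabs (P1 - P2) <= U ^ n * s)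
    by (apply fprod_lipschitz; [lra| intros j Hj; destruct (Hfg j Hj); lra]).
  assert (f n = pi / P1) as -> by (field_simplify_eq; lra).
  assert (g n = pi / P2) as -> by (field_simplify_eq; lra).
  replace (pi / P1 - pi / P2) with (pi * (P2 - P1) * / (P1 * P2)) by (field; lra).
  rewrite !Rabs_mult, (Rabs_pos_eq pi), (Rabs_pos_eq (/ (P1 * P2))), Rabs_minus_sym
    by (try lra; left; apply Rinv_0_lt_compat; nra).
  assert (/ (P1 * P2) <= / (l ^ n) ^ 2)
    by (apply Rinv_le_contravar; [apply pow_lt; lra| simpl; rewrite Rmult_1_r; apply Rmult_le_compat; lra]).
  assert (0 <= / (P1 * P2)) by (left; apply Rinv_0_lt_compat; nra).
  pose proof (Rabs_pos (P1 - P2)).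
  unfold Rdiv. apply Rle_trans with (pi * (U ^ n * s) * / (l ^ n) ^ 2); [|right; ring].
  apply Rmult_le_compat; nra.
Qed.

(* [eps / 2] and [/ eps + eps + 1] bound the overlap entries of torus points within [eps / 2]
   of [a] (see [overlap_a_range]); the [+ 1] makes the upper bound at least [1], as
   [fprod_lipschitz] requires. *)
Definition window_lip_const (n : nat) (pi eps : R) : R :=
  pi * (/ eps + eps + 1) ^ n / ((eps / 2) ^ n) ^ 2.

Definition glue_const (p : nat) (pi eps : R) : R :=
  2 + 4 / eps ^ 2 + window_lip_const (Nat.pred p) pi eps.

Lemma window_lip_const_nonneg n pi eps : 0 < pi -> 0 < eps -> 0 <= window_lip_const n pi eps.
Proof.
  intros Hpi He. unfold window_lip_const. assert (0 < / eps) by (apply Rinv_0_lt_compat; lra).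
  apply Rmult_le_pos; [apply Rmult_le_pos; [lra| apply pow_le; lra]|].
  left; apply Rinv_0_lt_compat, pow_lt, pow_lt; lra.
Qed.

Lemma four_div_sqr_nonneg eps : 0 < eps -> 0 <= 4 / eps ^ 2.
Proof. intro He. apply Rmult_le_pos; [lra| left; apply Rinv_0_lt_compat, pow_lt; lra]. Qed.

Lemma glue_const_ge2 p pi eps : 0 < pi -> 0 < eps -> 2 <= glue_const p pi eps.
Proof.
  intros Hpi He. unfold glue_const.
  pose proof (four_div_sqr_nonneg eps He). pose proof (window_lip_const_nonneg (Nat.pred p) pi eps Hpi He).
  lra.
Qed.

Section Gluing.

Variables (p' : nat) (pi sg eps : R) (a b : nat -> R) (a1 b1 a2 b2 : Z -> R) (w : nat).
Hypothesis Hpi : 0 < pi.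
Hypothesis Heps : 0 < eps.
Hypothesis Hab : forall n, (1 <= n)%nat -> eps < a n < / eps.
Hypothesis Hw1 : constant_windows (S p') pi sg a1 b1.
Hypothesis Hw2 : constant_windows (S p') pi sg a2 b2.
Hypothesis Hw : (1 <= w)%nat.

Let d1 := fsum (fun k => jdiff a b a1 b1 (w + k)) (S p').
Let d2 := fsum (fun k => jdiff a b a2 b2 (w + 1 + k)) (S p').

Let jdiff1_le j : (j <= p')%nat -> jdiff a b a1 b1 (w + j) <= d1.
Proof. intro Hj. apply (fsum_ge_term (fun k => jdiff a b a1 b1 (w + k))); [intros; apply jdiff_nonneg| lia]. Qed.

Let jdiff2_le j : (j <= p')%nat -> jdiff a b a2 b2 (w + 1 + j) <= d2.
Proof. intro Hj. apply (fsum_ge_term (fun k => jdiff a b a2 b2 (w + 1 + k))); [intros; apply jdiff_nonneg| lia]. Qed.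

Let d1_nonneg : 0 <= d1.
Proof. apply fsum_nonneg. intros. apply jdiff_nonneg. Qed.

Let d2_nonneg : 0 <= d2.
Proof. apply fsum_nonneg. intros. apply jdiff_nonneg. Qed.

Lemma overlap_pdist_sum :
  fsum (fun j => pdist a1 b1 a2 b2 (Z.of_nat (w + 1 + j))) p' <= d1 + d2.
Proof.
  apply Rle_trans with (fsum (fun j => jdiff a b a1 b1 (w + 1 + j) + jdiff a b a2 b2 (w + 1 + j)) p').
  { apply fsum_le. intros. apply pdist_le_jdiff. }
  rewrite fsum_plus. unfold d1, d2. rewrite fsum_succ_l.
  rewrite (fsum_ext (fun k => jdiff a b a1 b1 (w + S k)) (fun j => jdiff a b a1 b1 (w + 1 + j)))
    by (intros; f_equal; lia).
  cbn [fsum]. pose proof (jdiff_nonneg a b a1 b1 (w + 0)). pose proof (jdiff_nonneg a b a2 b2 (w + 1 + p')).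
  lra.
Qed.

Lemma overlap_pdist_le j : (j < p')%nat -> pdist a1 b1 a2 b2 (Z.of_nat (w + 1 + j)) <= d1 + d2.
Proof.
  intro Hj. pose proof (pdist_le_jdiff a b a1 b1 a2 b2 (w + 1 + j)).
  pose proof (jdiff1_le (S j) ltac:(lia)). pose proof (jdiff2_le j ltac:(lia)).
  replace (w + S j)%nat with (w + 1 + j)%nat in * by lia. lra.
Qed.

Lemma last_b_le : Rabs (b1 (Z.of_nat (w + 1 + p')) - b2 (Z.of_nat (w + 1 + p'))) <= d1 + d2.
Proof.
  destruct Hw1 as [_ [_ S1]]. destruct Hw2 as [_ [_ S2]].
  eapply Rle_trans; [apply (fsum_eq_last_le (fun j => b1 (Z.of_nat (w + 1 + j))) (fun j => b2 (Z.of_nat (w + 1 + j))))|].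
  { rewrite S1, S2. reflexivity. }
  eapply Rle_trans; [|apply overlap_pdist_sum]. apply fsum_le. intros. unfold pdist.
  pose proof (Rabs_pos (a1 (Z.of_nat (w + 1 + k)) - a2 (Z.of_nat (w + 1 + k)))). lra.
Qed.

Lemma overlap_a_range : d1 + d2 <= eps / 2 -> forall j, (j < p')%nat ->
  eps / 2 <= a1 (Z.of_nat (w + 1 + j)) <= / eps + eps + 1 /\
  eps / 2 <= a2 (Z.of_nat (w + 1 + j)) <= / eps + eps + 1.
Proof.
  intros Hsm j Hj. pose proof (Hab (w + 1 + j)%nat ltac:(lia)).
  pose proof (jdiff1_le (S j) ltac:(lia)) as X1. replace (w + S j)%nat with (w + 1 + j)%nat in X1 by lia.
  pose proof (jdiff2_le j ltac:(lia)) as X2. unfold jdiff in X1, X2.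
  pose proof d1_nonneg. pose proof d2_nonneg.
  pose proof (Rabs_pos (b (w + 1 + j)%nat - b1 (Z.of_nat (w + 1 + j)))).
  pose proof (Rabs_pos (b (w + 1 + j)%nat - b2 (Z.of_nat (w + 1 + j)))).
  assert (R1 : Rabs (a (w + 1 + j)%nat - a1 (Z.of_nat (w + 1 + j))) <= eps / 2) by lra.
  assert (R2 : Rabs (a (w + 1 + j)%nat - a2 (Z.of_nat (w + 1 + j))) <= eps / 2) by lra.
  apply Rabs_le_between in R1. apply Rabs_le_between in R2. lra.
Qed.

Lemma last_a_le_small : d1 + d2 <= eps / 2 ->
  Rabs (a1 (Z.of_nat (w + 1 + p')) - a2 (Z.of_nat (w + 1 + p'))) <= window_lip_const p' pi eps * (d1 + d2).
Proof.
  intro Hsm. destruct Hw1 as [_ [W1 _]]. destruct Hw2 as [_ [W2 _]].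
  eapply Rle_trans.
  { apply (fprod_eq_last_le (fun j => a1 (Z.of_nat (w + 1 + j))) (fun j => a2 (Z.of_nat (w + 1 + j))) p' pi (eps / 2) (/ eps + eps + 1));
      [lra| lra| pose proof (Rinv_0_lt_compat eps Heps); lra| apply W1| apply W2| exact (overlap_a_range Hsm)]. }
  apply Rmult_le_compat_l; [apply window_lip_const_nonneg; auto|].
  eapply Rle_trans; [|apply overlap_pdist_sum]. apply fsum_le. intros. unfold pdist.
  pose proof (Rabs_pos (b1 (Z.of_nat (w + 1 + k)) - b2 (Z.of_nat (w + 1 + k)))). lra.
Qed.

Lemma last_a_le_large : eps / 2 < d1 + d2 ->
  Rabs (a1 (Z.of_nat (w + 1 + p')) - a2 (Z.of_nat (w + 1 + p'))) <= (1 + 4 / eps ^ 2) * (d1 + d2).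
Proof.
  intro Hlg. destruct Hw1 as [[Pa1 [_ Pos1]] _]. destruct Hw2 as [[_ [_ Pos2]] _].
  set (n := (w + 1 + p')%nat).
  pose proof (Hab w Hw). pose proof (Hab n ltac:(unfold n; lia)).
  pose proof (jdiff1_le 0 ltac:(lia)) as X1. rewrite Nat.add_0_r in X1.
  pose proof (jdiff2_le p' ltac:(lia)) as X2. fold n in X2. unfold jdiff in X1, X2.
  assert (a1 (Z.of_nat n) = a1 (Z.of_nat w)) as ->.
  { unfold n. replace (Z.of_nat (w + 1 + p')) with (Z.of_nat w + Z.of_nat (S p'))%Z by lia. apply Pa1. }
  pose proof (Pos1 (Z.of_nat w)). pose proof (Pos2 (Z.of_nat n)).
  pose proof (Rabs_pos (b w - b1 (Z.of_nat w))). pose proof (Rabs_pos (b n - b2 (Z.of_nat n))).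
  pose proof (Rle_abs (a1 (Z.of_nat w) - a w)) as R1. rewrite Rabs_minus_sym in R1.
  pose proof (Rle_abs (a2 (Z.of_nat n) - a n)) as R2. rewrite Rabs_minus_sym in R2.
  assert (Rabs (a1 (Z.of_nat w) - a2 (Z.of_nat n)) <= a1 (Z.of_nat w) + a2 (Z.of_nat n))
    by (apply Rabs_le; lra).
  assert (2 / eps <= 4 / eps ^ 2 * (d1 + d2)).
  { replace (2 / eps) with (4 / eps ^ 2 * (eps / 2)) by (field; lra).
    apply Rmult_le_compat_l; [apply four_div_sqr_nonneg, Heps| lra]. }
  unfold Rdiv in *. lra.
Qed.

Lemma glue_windows z : pdist a1 b1 a2 b2 z <= glue_const (S p') pi eps * (d1 + d2).
Proof.
  destruct Hw1 as [[Pa1 [Pb1 _]] _]. destruct Hw2 as [[Pa2 [Pb2 _]] _].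
  destruct (Z_window_decomp (S p') w z ltac:(lia)) as [k [q [Hk ->]]].
  unfold pdist. rewrite !periodic_shift by assumption.
  pose proof (glue_const_ge2 (S p') pi eps Hpi Heps).
  pose proof d1_nonneg. pose proof d2_nonneg.
  destruct (Nat.eq_dec k p') as [->|Hkp].
  - pose proof last_b_le. unfold glue_const. simpl Nat.pred.
    pose proof (four_div_sqr_nonneg eps Heps). pose proof (window_lip_const_nonneg p' pi eps Hpi Heps).
    destruct (Rle_lt_dec (d1 + d2) (eps / 2)) as [Hsm|Hlg];
      [pose proof (last_a_le_small Hsm)| pose proof (last_a_le_large Hlg)]; nra.
  - pose proof (overlap_pdist_le k ltac:(lia)) as Hov. unfold pdist in Hov. nra.
Qed.

End Gluing.

Section NonnegGlb.

Variable E : R -> Prop.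
Hypothesis E_inhabited : exists x, E x.
Hypothesis E_nonneg : forall x, E x -> 0 <= x.

Lemma Glb_Rbar_nonneg_finite : Glb_Rbar E = Finite (real (Glb_Rbar E)) /\ 0 <= real (Glb_Rbar E).
Proof.
  destruct (Glb_Rbar_correct E) as [Hlb Hgr]. destruct E_inhabited as [x0 Hx0].
  assert (Z : Rbar_le 0 (Glb_Rbar E)) by (apply Hgr; intros x Hx; apply E_nonneg, Hx).
  pose proof (Hlb x0 Hx0) as U.
  destruct (Glb_Rbar E); simpl in Z, U |- *; tauto.
Qed.

Lemma Glb_Rbar_nonneg_le x : E x -> real (Glb_Rbar E) <= x.
Proof.
  intro Hx. destruct Glb_Rbar_nonneg_finite as [Ef _].
  pose proof (proj1 (Glb_Rbar_correct E) x Hx) as H. rewrite Ef in H. exact H.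
Qed.

Lemma Glb_Rbar_nonneg_ge y : (forall x, E x -> y <= x) -> y <= real (Glb_Rbar E).
Proof.
  intro Hy. destruct Glb_Rbar_nonneg_finite as [Ef _].
  assert (H : Rbar_le y (Glb_Rbar E)) by (apply Glb_Rbar_correct; intros x Hx; apply Hy, Hx).
  rewrite Ef in H. exact H.
Qed.

Lemma Glb_Rbar_nonneg_approx t : 0 < t -> exists x, E x /\ x <= real (Glb_Rbar E) + t.
Proof.
  intro Ht. apply NNPP. intro Hn.
  assert (real (Glb_Rbar E) + t <= real (Glb_Rbar E)); [|lra].
  apply Glb_Rbar_nonneg_ge. intros x Hx. apply Rnot_lt_le. intro Hlt. apply Hn. exists x. split; [exact Hx| lra].
Qed.

End NonnegGlb.

Lemma d_m_nonneg a b a' b' m : 0 <= d_m a b a' b' m.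
Proof. apply Series_nonneg_terms. intro n. apply Rmult_le_pos; [left; apply exp_pos| apply jdiff_nonneg]. Qed.

Lemma dt_m_nonneg p a b a' b' m : 0 <= dt_m p a b a' b' m.
Proof. apply fsum_nonneg. intros; apply jdiff_nonneg. Qed.

Section TorusDistances.

Variables (p : nat) (a0 b0 : Z -> R) (a b : nat -> R) (m : nat).
Hypothesis H0 : periodic_jacobi p a0 b0.

Let E_d := fun r : R => exists a' b' : Z -> R, iso_torus p a0 b0 a' b' /\ r = d_m a b a' b' m.
Let E_dt := fun r : R => exists a' b' : Z -> R, iso_torus p a0 b0 a' b' /\ r = dt_m p a b a' b' m.

Let E_d_inhabited : exists x, E_d x.
Proof. exists (d_m a b a0 b0 m), a0, b0. repeat split; auto; apply H0. Qed.

Let E_dt_inhabited : exists x, E_dt x.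
Proof. exists (dt_m p a b a0 b0 m), a0, b0. repeat split; auto; apply H0. Qed.

Let E_d_nonneg x : E_d x -> 0 <= x.
Proof. intros [a' [b' [_ ->]]]. apply d_m_nonneg. Qed.

Let E_dt_nonneg x : E_dt x -> 0 <= x.
Proof. intros [a' [b' [_ ->]]]. apply dt_m_nonneg. Qed.

Lemma d_torus_nonneg : 0 <= d_torus p a0 b0 a b m.
Proof. exact (proj2 (Glb_Rbar_nonneg_finite E_d E_d_inhabited E_d_nonneg)). Qed.

Lemma dt_torus_nonneg : 0 <= dt_torus p a0 b0 a b m.
Proof. exact (proj2 (Glb_Rbar_nonneg_finite E_dt E_dt_inhabited E_dt_nonneg)). Qed.

Lemma d_torus_le a' b' : iso_torus p a0 b0 a' b' -> d_torus p a0 b0 a b m <= d_m a b a' b' m.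
Proof. intro HT. apply (Glb_Rbar_nonneg_le E_d E_d_inhabited E_d_nonneg). exists a', b'. auto. Qed.

Lemma dt_torus_le a' b' : iso_torus p a0 b0 a' b' -> dt_torus p a0 b0 a b m <= dt_m p a b a' b' m.
Proof. intro HT. apply (Glb_Rbar_nonneg_le E_dt E_dt_inhabited E_dt_nonneg). exists a', b'. auto. Qed.

Lemma d_torus_ge y : (forall a' b', iso_torus p a0 b0 a' b' -> y <= d_m a b a' b' m) ->
  y <= d_torus p a0 b0 a b m.
Proof.
  intro Hy. apply (Glb_Rbar_nonneg_ge E_d E_d_inhabited E_d_nonneg).
  intros x [a' [b' [HT ->]]]. apply Hy, HT.
Qed.

Lemma dt_torus_approx t : 0 < t ->
  exists a' b', iso_torus p a0 b0 a' b' /\ dt_m p a b a' b' m <= dt_torus p a0 b0 a b m + t.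
Proof.
  intro Ht. destruct (Glb_Rbar_nonneg_approx E_dt E_dt_inhabited E_dt_nonneg t Ht)
    as [x [[a' [b' [HT ->]]] Hx]].
  exists a', b'. auto.
Qed.

End TorusDistances.

Lemma exp_le x y : x <= y -> exp x <= exp y.
Proof. intro H; destruct (Rle_lt_or_eq_dec x y H) as [h| ->]; [left; apply exp_increasing, h| lra]. Qed.

Lemma exp_mult_INR k x : exp (INR k * x) = exp x ^ k.
Proof.
  induction k; simpl pow; [rewrite Rmult_0_l, exp_0; reflexivity|].
  rewrite S_INR, Rmult_plus_distr_r, Rmult_1_l, exp_plus, IHk; ring.
Qed.

Lemma one_le_exp_nonneg x : 0 <= x -> 1 <= exp x.
Proof. intro H. rewrite <- exp_0. apply exp_le, H. Qed.

Lemma succ_le_exp_quarter k : INR k + 1 <= 4 * exp (INR k / 4).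
Proof. pose proof (exp_ineq1_le (INR k / 4)). lra. Qed.

Lemma exp_neg_half_bounds : 0 < exp (- / 2) < 1.
Proof. split; [apply exp_pos|]. rewrite <- exp_0. apply exp_increasing. lra. Qed.

Lemma d_m_le_geometric a b a' b' m c : 0 <= c ->
  (forall k, jdiff a b a' b' (m + k) <= c * exp (INR k / 2)) ->
  d_m a b a' b' m <= c / (1 - exp (- / 2)).
Proof.
  intros Hc Hk. pose proof exp_neg_half_bounds.
  assert (Hs : is_series (fun k => c * exp (- / 2) ^ k) (c * / (1 - exp (- / 2)))).
  { apply (is_series_scal_l c (fun k => exp (- / 2) ^ k)), is_series_geom.
    rewrite Rabs_pos_eq; lra. }
  unfold d_m, Rdiv. rewrite <- (is_series_unique _ _ Hs).
  apply Series_le; [| eexists; exact Hs].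
  intro k. split; [apply Rmult_le_pos; [left; apply exp_pos| apply jdiff_nonneg]|].
  rewrite <- exp_mult_INR.
  replace (INR k * - / 2) with (- INR k + INR k / 2) by field. rewrite exp_plus.
  pose proof (exp_pos (- INR k)). pose proof (Hk k). nra.
Qed.

Lemma jdiff_telescope a b (A B : nat -> Z -> R) n k :
  jdiff a b (A O) (B O) n <=
  jdiff a b (A k) (B k) n + fsum (fun i => pdist (A i) (B i) (A (S i)) (B (S i)) (Z.of_nat n)) k.
Proof.
  induction k; simpl fsum; [lra|].
  pose proof (jdiff_triangle a b (A k) (B k) (A (S k)) (B (S k)) n). lra.
Qed.

(* The [k] gluing errors, each [O (exp (k / 4))], are absorbed by [k + 1 <= 4 * exp (k / 4)]. *)
Lemma chain_growth a b (A B : nat -> Z -> R) (dl : nat -> R) L Y m k :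
  0 <= L -> 0 <= Y ->
  (forall i, 0 <= dl i <= Y * exp (INR i / 4)) ->
  (forall i z, pdist (A i) (B i) (A (S i)) (B (S i)) z <= L * (dl i + dl (S i))) ->
  jdiff a b (A k) (B k) (m + k) <= dl k ->
  jdiff a b (A O) (B O) (m + k) <= 4 * (1 + 2 * L) * Y * exp (INR k / 2).
Proof.
  intros HL HY Hdl Hglue Hk.
  set (e := exp (INR k / 4)).
  assert (He1 : 1 <= e) by (apply one_le_exp_nonneg; pose proof (pos_INR k); lra).
  assert (Hsum : fsum (fun i => pdist (A i) (B i) (A (S i)) (B (S i)) (Z.of_nat (m + k))) k
                 <= (2 * L * Y * e) * INR k).
  { rewrite <- fsum_const. apply fsum_le. intros i Hi. eapply Rle_trans; [apply Hglue|].
    apply le_INR in Hi. rewrite S_INR in Hi.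
    destruct (Hdl i), (Hdl (S i)).
    assert (exp (INR i / 4) <= e) by (apply exp_le; lra).
    assert (exp (INR (S i) / 4) <= e) by (apply exp_le; rewrite S_INR; lra).
    assert (dl i + dl (S i) <= 2 * Y * e) by nra. nra. }
  assert (Hexp : exp (INR k / 2) = e * e) by (unfold e; rewrite <- exp_plus; f_equal; lra).
  pose proof (jdiff_telescope a b A B (m + k) k). pose proof (Hdl k) as [_ Hdk]. fold e in Hdk.
  pose proof (succ_le_exp_quarter k). fold e in H0. pose proof (pos_INR k).
  rewrite Hexp.
  assert (Y * e * (1 + 2 * L * INR k) <= Y * e * ((1 + 2 * L) * (4 * e))).
  { apply Rmult_le_compat_l; [nra|]. nra. }
  nra.
Qed.

Definition tail_const (p : nat) (pi eps : R) : R :=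
  4 * (1 + 2 * glue_const p pi eps) / (1 - exp (- / 2)).

Lemma tail_const_pos p pi eps : 0 < pi -> 0 < eps -> 0 < tail_const p pi eps.
Proof.
  intros Hpi He. pose proof (glue_const_ge2 p pi eps Hpi He). pose proof exp_neg_half_bounds.
  unfold tail_const. apply Rdiv_lt_0_compat; lra.
Qed.

Definition tail_dominated (C : R) (g d : nat -> R) : Prop :=
  forall j Y, 0 <= Y -> (forall i, g (S j + i)%nat <= Y * exp (INR i / 4)) -> d (S j) <= C * Y.

Section TailBound.

Variables (p : nat) (a0 b0 : Z -> R) (eps : R) (a b : nat -> R).
Hypothesis Hp : (1 <= p)%nat.
Hypothesis H0 : periodic_jacobi p a0 b0.
Hypothesis Heps : 0 < eps.
Hypothesis Hab : forall n, (1 <= n)%nat -> eps < a n < / eps.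

(* Pick almost optimal torus points for the windows starting at [m], [m + 1], ...;
   consecutive ones are glued, and the first one is then a good competitor for [d_torus m]. *)
Lemma d_torus_le_chain m Y th : (1 <= m)%nat -> 0 <= Y -> 0 < th ->
  (forall i, dt_torus p a0 b0 a b (m + i) <= Y * exp (INR i / 4)) ->
  d_torus p a0 b0 a b m <= tail_const p (aprod a0 p) eps * (Y + th).
Proof.
  intros Hm HY Hth HdY.
  set (pi := aprod a0 p). set (L := glue_const p pi eps).
  assert (Hpi : 0 < pi) by (apply aprod_pos, H0).
  assert (HL : 2 <= L) by (apply glue_const_ge2; auto).
  destruct (choice (fun i (T : (Z -> R) * (Z -> R)) => iso_torus p a0 b0 (fst T) (snd T) /\
              dt_m p a b (fst T) (snd T) (m + i) <= dt_torus p a0 b0 a b (m + i) + th)) as [T HT].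
  { intro i. destruct (dt_torus_approx p a0 b0 a b (m + i) H0 th Hth) as [a' [b' Hab']].
    exists (a', b'). exact Hab'. }
  set (A := fun i => fst (T i)). set (B := fun i => snd (T i)).
  set (dl := fun i => dt_m p a b (A i) (B i) (m + i)).
  eapply Rle_trans; [apply (d_torus_le p a0 b0 a b m H0 (A O) (B O)), HT|].
  unfold tail_const. fold pi L. unfold Rdiv. rewrite Rmult_assoc, (Rmult_comm (/ _)), <- Rmult_assoc.
  apply d_m_le_geometric; [nra|]. intro k.
  apply (chain_growth a b A B dl); [lra| lra| | | ].
  - intro i. split; [apply dt_m_nonneg|]. destruct (HT i) as [_ Hi]. pose proof (HdY i).
    pose proof (one_le_exp_nonneg (INR i / 4) ltac:(pose proof (pos_INR i); lra)).
    unfold dl, A, B. nra.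
  - intros i z. destruct p as [|p']; [lia|].
    replace (dl (S i)) with (fsum (fun k => jdiff a b (A (S i)) (B (S i)) (m + i + 1 + k)) (S p')).
    + assert (W : forall i, constant_windows (S p') pi (bsum b0 (S p')) (A i) (B i))
        by (intro i'; apply iso_torus_constant_windows; [lia| exact H0| apply HT]).
      apply (glue_windows p' pi (bsum b0 (S p')) eps a b); auto. lia.
    + unfold dl, dt_m. apply fsum_ext. intros; f_equal; lia.
  - unfold dl, dt_m. rewrite <- (Nat.add_0_r (m + k)) at 1.
    apply (fsum_ge_term (fun j => jdiff a b (A k) (B k) (m + k + j))); [intros; apply jdiff_nonneg| lia].
Qed.

Lemma d_torus_tail_dominated :
  tail_dominated (tail_const p (aprod a0 p) eps) (dt_torus p a0 b0 a b) (d_torus p a0 b0 a b).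
Proof.
  intros j Y HY HdY. set (C := tail_const p (aprod a0 p) eps).
  assert (HC : 0 < C) by (apply tail_const_pos; [apply aprod_pos, H0| exact Heps]).
  apply Rle_plus_epsilon. intros t Ht.
  replace (C * Y + t) with (C * (Y + t / C)) by (field; lra).
  apply d_torus_le_chain; auto; [lia| apply Rdiv_lt_0_compat; lra].
Qed.

End TailBound.

Lemma ex_series_d_m a b a' b' m K :
  (forall k, jdiff a b a' b' (m + k) <= K) ->
  ex_series (fun k => exp (- INR k) * jdiff a b a' b' (m + k)).
Proof.
  intro HK.
  assert (He : 0 < exp (-1) < 1) by (split; [apply exp_pos| rewrite <- exp_0; apply exp_increasing; lra]).
  apply (@ex_series_le R_AbsRing R_CompleteNormedModule _ (fun k => K * exp (-1) ^ k)).
  - intro k. change (norm ?x) with (Rabs x).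
    rewrite Rabs_pos_eq by (apply Rmult_le_pos; [left; apply exp_pos| apply jdiff_nonneg]).
    rewrite <- exp_mult_INR, Rmult_comm. replace (INR k * -1) with (- INR k) by ring.
    apply Rmult_le_compat_r; [left; apply exp_pos| apply HK].
  - exists (K * / (1 - exp (-1))). apply (is_series_scal_l K (fun k => exp (-1) ^ k)).
    apply is_series_geom. rewrite Rabs_pos_eq; lra.
Qed.

Lemma jdiff_bounded p a b a' b' m M eps : (1 <= p)%nat -> (1 <= m)%nat -> periodic_jacobi p a' b' ->
  0 < eps ->
  (forall n, (1 <= n)%nat -> eps < a n < / eps) -> (forall n, (1 <= n)%nat -> Rabs (b n) <= M) ->
  exists K, forall k, jdiff a b a' b' (m + k) <= K.
Proof.
  intros Hp Hm [Pa [Pb _]] He Hab Hb.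
  exists (/ eps + M + fsum (fun k => Rabs (a' (Z.of_nat (S k)))) p
          + fsum (fun k => Rabs (b' (Z.of_nat (S k)))) p).
  intro k. unfold jdiff. set (n := (m + k)%nat).
  pose proof (Hab n ltac:(lia)). pose proof (Hb n ltac:(lia)).
  pose proof (periodic_abs_le p a' Hp Pa (Z.of_nat n)). pose proof (periodic_abs_le p b' Hp Pb (Z.of_nat n)).
  pose proof (Rabs_triang (a n) (- a' (Z.of_nat n))). pose proof (Rabs_triang (b n) (- b' (Z.of_nat n))).
  rewrite Rabs_Ropp in H3, H4. rewrite (Rabs_pos_eq (a n)) in H3 by lra.
  unfold Rminus. lra.
Qed.

Lemma dt_torus_le_d_torus p a0 b0 eps a b M m :
  (1 <= p)%nat -> periodic_jacobi p a0 b0 -> (1 <= m)%nat -> 0 < eps ->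
  (forall n, (1 <= n)%nat -> eps < a n < / eps) -> (forall n, (1 <= n)%nat -> Rabs (b n) <= M) ->
  exp (1 - INR p) * dt_torus p a0 b0 a b m <= d_torus p a0 b0 a b m.
Proof.
  intros Hp H0 Hm He Hab Hb. apply d_torus_ge; [exact H0|]. intros a' b' HT.
  apply Rle_trans with (exp (1 - INR p) * dt_m p a b a' b' m).
  { apply Rmult_le_compat_l; [left; apply exp_pos| apply dt_torus_le; auto]. }
  unfold dt_m, d_m. rewrite <- fsum_scal.
  apply Rle_trans with (fsum (fun k => exp (- INR k) * jdiff a b a' b' (m + k)) p).
  - apply fsum_le. intros k Hk. apply Rmult_le_compat_r; [apply jdiff_nonneg|].
    apply exp_le. apply le_INR in Hk. rewrite S_INR in Hk. lra.
  - apply fsum_le_Series; [intro k; apply Rmult_le_pos; [left; apply exp_pos| apply jdiff_nonneg]|].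
    destruct (jdiff_bounded p a b a' b' m M eps) as [K HK]; auto; [apply HT|].
    apply (ex_series_d_m _ _ _ _ _ K HK).
Qed.

Lemma rpow_nonneg x y : 0 <= rpow x y.
Proof. unfold rpow. destruct (Rlt_dec 0 x); [left; apply exp_pos| lra]. Qed.

Lemma rpow_pos x y : 0 < x -> rpow x y = Rpower x y.
Proof. intro H; unfold rpow; destruct (Rlt_dec 0 x); [reflexivity| lra]. Qed.

Lemma rpow_npos x y : x <= 0 -> rpow x y = 0.
Proof. intro H; unfold rpow; destruct (Rlt_dec 0 x); [lra| reflexivity]. Qed.

Lemma rpow_le x x' y : 0 <= y -> x <= x' -> rpow x y <= rpow x' y.
Proof.
  intros Hy Hx. destruct (Rlt_dec 0 x) as [h|h].
  - rewrite !rpow_pos by lra. apply Rle_Rpower_l; lra.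
  - rewrite (rpow_npos x) by lra. apply rpow_nonneg.
Qed.

Lemma rpow_mult c x y : 0 < c -> 0 <= x -> rpow (c * x) y = Rpower c y * rpow x y.
Proof.
  intros Hc Hx. destruct (Rle_lt_or_eq_dec 0 x Hx) as [h| <-].
  - rewrite !rpow_pos by nra. rewrite Rpower_mult_distr; auto.
  - rewrite Rmult_0_r, !rpow_npos by lra. ring.
Qed.

Lemma rpow_rpow_inv q x : 0 < q -> 0 <= x -> rpow (rpow x q) (/ q) = x.
Proof.
  intros Hq Hx. destruct (Rle_lt_or_eq_dec 0 x Hx) as [h| <-].
  - rewrite (rpow_pos x), rpow_pos by (auto; apply exp_pos).
    rewrite Rpower_mult, Rinv_r by lra. apply Rpower_1; auto.
  - rewrite (rpow_npos 0) by lra. apply rpow_npos; lra.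
Qed.

Lemma Rbar_mult_pos_p_infty C : 0 < C -> Rbar_mult (Finite C) p_infty = p_infty.
Proof.
  intro H. simpl. destruct (Rle_dec 0 C) as [h|h]; [|lra].
  destruct (Rle_lt_or_eq_dec 0 C h); [reflexivity| lra].
Qed.

Lemma Rbar_le_p_infty x : Rbar_le x p_infty.
Proof. destruct x; simpl; auto. Qed.

Lemma Lim_seq_incr_nonneg u : (forall n, 0 <= u n) -> (forall n, u n <= u (S n)) ->
  Lim_seq u = p_infty \/ exists s, Lim_seq u = Finite s /\ 0 <= s /\ forall n, u n <= s.
Proof.
  intros H0 Hi. pose proof (Lim_seq_correct u (ex_lim_seq_incr u Hi)) as Hl.
  destruct (Lim_seq u) as [s| |] eqn:E.
  - right. exists s. pose proof (is_lim_seq_incr_compare u s Hl Hi) as X.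
    split; [reflexivity| split; auto]. pose proof (H0 O); pose proof (X O); lra.
  - left; reflexivity.
  - exfalso. assert (Rbar_le (Lim_seq (fun _ => 0)) (Lim_seq u))
      by (apply Lim_seq_le_loc; exists O; intros; auto).
    rewrite Lim_seq_const, E in H. exact H.
Qed.

Definition lq_partial (q : R) (f : nat -> R) (N : nat) : R :=
  fsum (fun i => rpow (Rabs (f (S i))) q) N.

Lemma lq_partial_nonneg q f N : 0 <= lq_partial q f N.
Proof. apply fsum_nonneg; intros; apply rpow_nonneg. Qed.

Lemma lq_partial_incr q f N : lq_partial q f N <= lq_partial q f (S N).
Proof. unfold lq_partial; simpl. pose proof (rpow_nonneg (Rabs (f (S N))) q); lra. Qed.

Lemma lq_norm_fin_scal_le q c g f : 1 <= q -> 0 < c -> (forall i, 0 <= g (S i)) ->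
  (forall i, c * g (S i) <= f (S i)) ->
  Rbar_le (Rbar_mult c (lq_norm (Finite q) g)) (lq_norm (Finite q) f).
Proof.
  intros Hq Hc Hg Hf. unfold lq_norm. fold (lq_partial q g) (lq_partial q f).
  set (cq := Rpower c q). assert (Hcq : 0 < cq) by apply exp_pos.
  assert (Hlim : Rbar_le (Rbar_mult cq (Lim_seq (lq_partial q g))) (Lim_seq (lq_partial q f))).
  { rewrite <- Lim_seq_scal_l. apply Lim_seq_le_loc. exists O. intros N _.
    unfold lq_partial. rewrite <- fsum_scal. apply fsum_le. intros i _.
    pose proof (Hg i). pose proof (Hf i).
    rewrite (Rabs_pos_eq (g (S i))), (Rabs_pos_eq (f (S i))) by nra.
    unfold cq. rewrite <- rpow_mult by lra. apply rpow_le; lra. }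
  destruct (Lim_seq_incr_nonneg _ (lq_partial_nonneg q g) (lq_partial_incr q g))
    as [Eg | [sg [Eg [Hsg _]]]];
  destruct (Lim_seq_incr_nonneg _ (lq_partial_nonneg q f) (lq_partial_incr q f))
    as [Ef | [sf [Ef _]]];
  rewrite Eg, Ef in *.
  - rewrite Rbar_mult_pos_p_infty by lra. apply Rbar_le_p_infty.
  - rewrite Rbar_mult_pos_p_infty in Hlim by lra. contradiction.
  - apply Rbar_le_p_infty.
  - simpl in Hlim |- *.
    replace (c * rpow sg (/ q)) with (rpow (cq * sg) (/ q)).
    + apply rpow_le; [left; apply Rinv_0_lt_compat; lra| exact Hlim].
    + rewrite rpow_mult by lra. unfold cq. rewrite Rpower_mult, Rinv_r, Rpower_1 by lra. reflexivity.
Qed.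

Lemma lq_norm_inf_scal_le c g f : 0 < c -> (forall i, 0 <= g (S i)) ->
  (forall i, c * g (S i) <= f (S i)) ->
  Rbar_le (Rbar_mult c (lq_norm p_infty g)) (lq_norm p_infty f).
Proof.
  intros Hc Hg Hf. unfold lq_norm. rewrite <- Sup_seq_scal_l by lra.
  apply Sup_seq_le. intro n. simpl. pose proof (Hg n). pose proof (Hf n).
  rewrite (Rabs_pos_eq (g (S n))), (Rabs_pos_eq (f (S n))) by nra. lra.
Qed.

Lemma lq_norm_scal_le q c g f : Rbar_le 1 q -> 0 < c -> (forall i, 0 <= g (S i)) ->
  (forall i, c * g (S i) <= f (S i)) ->
  Rbar_le (Rbar_mult c (lq_norm q g)) (lq_norm q f).
Proof.
  intros Hq. destruct q as [q| |]; simpl in Hq; [| | contradiction].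
  - apply lq_norm_fin_scal_le, Hq.
  - apply lq_norm_inf_scal_le.
Qed.

Lemma exp_neg_quarter_bounds : 0 < exp (- / 4) < 1.
Proof. split; [apply exp_pos|]. rewrite <- exp_0. apply exp_increasing. lra. Qed.

Definition geom_tail (u : nat -> R) (j : nat) : R :=
  Series (fun i => exp (- / 4) ^ i * u (j + i)%nat).

Section GeometricTails.

Variables (u : nat -> R) (s : R).
Hypothesis u_nonneg : forall j, 0 <= u j.
Hypothesis u_partial_le : forall N, fsum u N <= s.

Let u_shift_partial_le i N : fsum (fun j => u (j + i)%nat) N <= s.
Proof.
  pose proof (fsum_add_split u i N). pose proof (fsum_nonneg u i ltac:(auto)).
  pose proof (u_partial_le (N + i)). lra.
Qed.

Let geometric_series : is_series (fun i => s * exp (- / 4) ^ i) (s * / (1 - exp (- / 4))).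
Proof.
  pose proof exp_neg_quarter_bounds.
  apply (is_series_scal_l s (fun i => exp (- / 4) ^ i)), is_series_geom.
  rewrite Rabs_pos_eq; lra.
Qed.

Lemma ex_series_geom_tail j : ex_series (fun i => exp (- / 4) ^ i * u (j + i)%nat).
Proof.
  pose proof exp_neg_quarter_bounds.
  apply (@ex_series_le R_AbsRing R_CompleteNormedModule _ (fun i => s * exp (- / 4) ^ i));
    [| eexists; exact geometric_series].
  intro i. change (norm ?x) with (Rabs x).
  rewrite Rabs_pos_eq by (apply Rmult_le_pos; [apply pow_le; lra| auto]).
  rewrite Rmult_comm. apply Rmult_le_compat_r; [apply pow_le; lra|].
  pose proof (u_shift_partial_le (j + i) 1) as Hu. simpl in Hu. lra.
Qed.

Lemma geom_tail_ge_term j i : exp (- / 4) ^ i * u (j + i)%nat <= geom_tail u j.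
Proof.
  pose proof exp_neg_quarter_bounds.
  apply (Series_ge_term (fun i => exp (- / 4) ^ i * u (j + i)%nat)); [| apply ex_series_geom_tail].
  intro k. apply Rmult_le_pos; [apply pow_le; lra| auto].
Qed.

Lemma fsum_geom_tail_le N : fsum (geom_tail u) N <= s / (1 - exp (- / 4)).
Proof.
  pose proof exp_neg_quarter_bounds.
  destruct (Series_fsum (fun j i => exp (- / 4) ^ i * u (j + i)%nat) N ex_series_geom_tail) as [_ E].
  unfold geom_tail, Rdiv. rewrite <- E, <- (is_series_unique _ _ geometric_series).
  apply Series_le; [| eexists; exact geometric_series].
  intro i. split.
  - apply fsum_nonneg. intros. apply Rmult_le_pos; [apply pow_le; lra| auto].
  - rewrite fsum_scal, Rmult_comm. apply Rmult_le_compat_r; [apply pow_le; lra| apply u_shift_partial_le].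
Qed.

End GeometricTails.

(* With [u = h ^ q], the weight [exp (- i / 4)] in [geom_tail u j] gives back the growth
   allowance [exp (i / 4)] of [tail_dominated]. *)
Lemma le_rpow_geom_tail h q s j i : 1 <= q -> (forall j, 0 <= h j) ->
  (forall N, fsum (fun j => rpow (h j) q) N <= s) ->
  h (j + i)%nat <= rpow (geom_tail (fun j => rpow (h j) q) j) (/ q) * exp (INR i / 4).
Proof.
  intros Hq Hh Hs. set (u := fun j => rpow (h j) q). set (Z := geom_tail u j).
  assert (Hu : forall j, 0 <= u j) by (intro; apply rpow_nonneg).
  assert (Hr : exp (- / 4) ^ i * exp (INR i / 4) = 1).
  { rewrite <- exp_mult_INR, <- exp_plus, <- exp_0. f_equal. field. }
  assert (Huji : u (j + i)%nat <= exp (INR i / 4) * Z).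
  { pose proof (geom_tail_ge_term u s Hu Hs j i) as T. fold Z in T.
    apply Rmult_le_compat_l with (r := exp (INR i / 4)) in T; [| left; apply exp_pos].
    rewrite <- Rmult_assoc, (Rmult_comm (exp _)), Hr, Rmult_1_l in T. exact T. }
  assert (HZ : 0 <= Z) by (pose proof (Hu (j + i)%nat); pose proof (exp_pos (INR i / 4)); nra).
  assert (Hq' : 0 < / q <= 1)
    by (split; [apply Rinv_0_lt_compat; lra| rewrite <- Rinv_1; apply Rinv_le_contravar; lra]).
  rewrite <- (rpow_rpow_inv q (h (j + i)%nat)) by (auto; lra). fold (u (j + i)%nat).
  apply Rle_trans with (rpow (exp (INR i / 4) * Z) (/ q)); [apply rpow_le; lra|].
  rewrite rpow_mult, Rmult_comm by (auto; apply exp_pos).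
  apply Rmult_le_compat_l; [apply rpow_nonneg|].
  unfold Rpower. rewrite ln_exp. apply exp_le. pose proof (pos_INR i). nra.
Qed.

Lemma lq_partial_le_tail_dominated q C g d sg : 1 <= q -> 0 < C ->
  (forall i, 0 <= g (S i)) -> (forall i, 0 <= d (S i)) -> tail_dominated C g d ->
  (forall N, lq_partial q g N <= sg) ->
  forall N, lq_partial q d N <= Rpower C q * (sg / (1 - exp (- / 4))).
Proof.
  intros Hq HC Hg Hd Hdom Hsg N.
  set (h := fun j => g (S j)). set (Z := geom_tail (fun j => rpow (h j) q)).
  assert (Hh : forall N, fsum (fun j => rpow (h j) q) N <= sg).
  { intro M. rewrite <- (Hsg M). right. apply fsum_ext. intros. unfold h. rewrite Rabs_pos_eq; auto. }
  assert (Hdj : forall j, rpow (Rabs (d (S j))) q <= Rpower C q * Z j).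
  { intro j. rewrite Rabs_pos_eq by auto.
    apply Rle_trans with (rpow (C * rpow (Z j) (/ q)) q).
    - apply rpow_le; [lra|]. apply Hdom; [apply rpow_nonneg|].
      intro i. apply (le_rpow_geom_tail h q sg j i); auto.
    - rewrite rpow_mult by (auto; apply rpow_nonneg).
      assert (HZ : 0 <= Z j).
      { apply Series_nonneg_terms. intro i.
        apply Rmult_le_pos; [apply pow_le, Rlt_le, exp_pos| apply rpow_nonneg]. }
      pose proof (rpow_rpow_inv (/ q) (Z j) ltac:(apply Rinv_0_lt_compat; lra) HZ) as E.
      rewrite Rinv_inv in E. rewrite E. lra. }
  apply Rle_trans with (Rpower C q * fsum Z N).
  - unfold lq_partial. rewrite <- fsum_scal. apply fsum_le. intros j _. apply Hdj.
  - apply Rmult_le_compat_l; [left; apply exp_pos|].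
    apply (fsum_geom_tail_le _ sg); [intro; apply rpow_nonneg| exact Hh].
Qed.

Lemma lq_norm_fin_tail_dominated_le q C g d : 1 <= q -> 0 < C ->
  (forall i, 0 <= g (S i)) -> (forall i, 0 <= d (S i)) -> tail_dominated C g d ->
  Rbar_le (lq_norm (Finite q) d) (Rbar_mult (C * / (1 - exp (- / 4))) (lq_norm (Finite q) g)).
Proof.
  intros Hq HC Hg Hd Hdom. unfold lq_norm. fold (lq_partial q g) (lq_partial q d).
  pose proof exp_neg_quarter_bounds. set (K := / (1 - exp (- / 4))).
  assert (HK : 1 <= K) by (unfold K; rewrite <- Rinv_1; apply Rinv_le_contravar; lra).
  destruct (Lim_seq_incr_nonneg _ (lq_partial_nonneg q g) (lq_partial_incr q g))
    as [Eg | [sg [Eg [Hsg Hbd]]]]; rewrite Eg.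
  { rewrite Rbar_mult_pos_p_infty by nra. apply Rbar_le_p_infty. }
  pose proof (lq_partial_le_tail_dominated q C g d sg Hq HC Hg Hd Hdom Hbd) as Hpd.
  fold K in Hpd. unfold Rdiv in Hpd. set (B := Rpower C q * (sg * K)) in Hpd.
  assert (HL : Rbar_le (Lim_seq (lq_partial q d)) (Lim_seq (fun _ => B)))
    by (apply Lim_seq_le_loc; exists O; intros; auto).
  rewrite Lim_seq_const in HL.
  destruct (Lim_seq_incr_nonneg _ (lq_partial_nonneg q d) (lq_partial_incr q d))
    as [Ed | [sd [Ed _]]]; rewrite Ed in HL |- *; simpl in HL |- *; [contradiction|].
  assert (Hq' : 0 < / q <= 1)
    by (split; [apply Rinv_0_lt_compat; lra| rewrite <- Rinv_1; apply Rinv_le_contravar; lra]).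
  apply Rle_trans with (rpow B (/ q)); [apply rpow_le; lra|].
  unfold B. rewrite Rmult_comm with (r1 := sg), !rpow_mult by (try apply exp_pos; nra).
  rewrite Rpower_mult, Rinv_r, Rpower_1 by lra.
  assert (Rpower K (/ q) <= K).
  { rewrite <- (Rpower_1 K) at 2 by lra. apply Rle_Rpower; lra. }
  pose proof (rpow_nonneg sg (/ q)). pose proof (exp_pos (/ q * ln K)).
  change (exp (/ q * ln K)) with (Rpower K (/ q)) in H2.
  rewrite Rmult_assoc. apply Rmult_le_compat_l; [lra|]. apply Rmult_le_compat_r; lra.
Qed.

Lemma lq_norm_inf_tail_dominated_le C g d : 0 < C ->
  (forall i, 0 <= g (S i)) -> (forall i, 0 <= d (S i)) -> tail_dominated C g d ->
  Rbar_le (lq_norm p_infty d) (Rbar_mult (C * / (1 - exp (- / 4))) (lq_norm p_infty g)).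
Proof.
  intros HC Hg Hd Hdom. unfold lq_norm.
  pose proof exp_neg_quarter_bounds. set (K := / (1 - exp (- / 4))).
  assert (HK : 1 <= K) by (unfold K; rewrite <- Rinv_1; apply Rinv_le_contravar; lra).
  assert (Hm : forall i, Rbar_le (Finite (Rabs (g (S i)))) (Sup_seq (fun i => Finite (Rabs (g (S i))))))
    by (intro i; apply (Sup_seq_minor_le _ _ i); simpl; lra).
  destruct (Sup_seq (fun i => Finite (Rabs (g (S i))))) as [Yg| |].
  - assert (Hb : forall i, g (S i) <= Yg).
    { intro i. pose proof (Hm i) as X. simpl in X. rewrite Rabs_pos_eq in X by auto. exact X. }
    assert (HY : 0 <= Yg) by (pose proof (Hb O); pose proof (Hg O); lra).
    assert (Hdi : forall i, d (S i) <= C * Yg).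
    { intro j. apply Hdom; auto. intro i. replace (S j + i)%nat with (S (j + i)) by lia.
      pose proof (Hb (j + i)%nat). pose proof (one_le_exp_nonneg (INR i / 4) ltac:(pose proof (pos_INR i); lra)).
      nra. }
    assert (C * Yg <= C * K * Yg) by (rewrite Rmult_assoc; apply Rmult_le_compat_l; nra).
    simpl. destruct (Rbar_le_lt_dec (Sup_seq (fun i => Finite (Rabs (d (S i))))) (C * K * Yg))
      as [h|h]; [exact h| exfalso].
    apply Sup_seq_minor_lt in h. destruct h as [n h]. simpl in h.
    rewrite Rabs_pos_eq in h by auto. pose proof (Hdi n). lra.
  - rewrite Rbar_mult_pos_p_infty by (apply Rmult_lt_0_compat; lra). apply Rbar_le_p_infty.
  - exfalso. exact (Hm O).
Qed.

Lemma lq_norm_tail_dominated_le q C g d : Rbar_le 1 q -> 0 < C ->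
  (forall i, 0 <= g (S i)) -> (forall i, 0 <= d (S i)) -> tail_dominated C g d ->
  Rbar_le (lq_norm q d) (Rbar_mult (C * / (1 - exp (- / 4))) (lq_norm q g)).
Proof.
  intros Hq. destruct q as [q| |]; simpl in Hq; [| | contradiction].
  - apply lq_norm_fin_tail_dominated_le, Hq.
  - apply lq_norm_inf_tail_dominated_le.
Qed.

Theorem proposition3p5 (p : nat) (a0 b0 : Z -> R) :
  (1 <= p)%nat ->
  periodic_jacobi p a0 b0 ->
  forall q : Rbar, Rbar_le (Finite 1) q ->
  forall eps : R, 0 < eps ->
  exists C : R, 0 < C /\
    forall a b : nat -> R,
      (forall n : nat, (1 <= n)%nat -> eps < a n < / eps) ->
      (exists M : R, forall n : nat, (1 <= n)%nat -> Rabs (b n) <= M) ->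
      Rbar_le (Rbar_mult (Finite (exp (1 - INR p)))
                         (lq_norm q (dt_torus p a0 b0 a b)))
              (lq_norm q (d_torus p a0 b0 a b)) /\
      Rbar_le (lq_norm q (d_torus p a0 b0 a b))
              (Rbar_mult (Finite C) (lq_norm q (dt_torus p a0 b0 a b))).
Proof.
  intros Hp H0 q Hq eps He.
  set (C := tail_const p (aprod a0 p) eps).
  assert (HC : 0 < C) by (apply tail_const_pos; [apply aprod_pos, H0| exact He]).
  pose proof exp_neg_quarter_bounds.
  exists (C * / (1 - exp (- / 4))). split; [apply Rmult_lt_0_compat; [lra| apply Rinv_0_lt_compat; lra]|].
  intros a b Hab [M Hb].
  assert (Hdt : forall i, 0 <= dt_torus p a0 b0 a b (S i)) by (intro; apply dt_torus_nonneg, H0).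
  assert (Hd : forall i, 0 <= d_torus p a0 b0 a b (S i)) by (intro; apply d_torus_nonneg, H0).
  split.
  - apply lq_norm_scal_le; [exact Hq| apply exp_pos| exact Hdt|].
    intro i. apply (dt_torus_le_d_torus p a0 b0 eps a b M); auto; lia.
  - apply lq_norm_tail_dominated_le; auto.
    apply d_torus_tail_dominated; auto.
Qed.
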